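(* Let $0<m<M$, let $A,B\in\mathbb{P}_n^+$ satisfy $mI\le A\le MI$ and $mI\le B\le MI$, and let $f:[0,\infty)\to[0,\infty)$ be a differentiable convex function with $f(0)=0$. Suppose that either (i) $\lambda_j(B)<\lambda_n(A)$ for all $j=1,\dots,n$, or (ii) $\lambda_1(A)<\lambda_j(B)$ for all $j=1,\dots,n$. Then $$(\det(f(A)+f(B)))^{1/n}\le 2^{1-\frac1n}\,\frac{f(M)}{M}\big((\det A)^{1/n}+(\det B)^{1/n}\big).$$
   Context: $\mathbb{P}_n^+$ denotes the set of $n\times n$ complex positive definite matrices, $I$ is the identity matrix, $\le$ is the Löwner order, and $f(A)$ is defined by functional calculus. For a Hermitian matrix $X$, $\lambda_1(X)\ge\dots\ge\lambda_n(X)$ are its eigenvalues in decreasing order. *)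

From mathcomp Require Import all_boot all_order all_algebra.
From mathcomp Require Import all_classical all_reals all_analysis.
From mathcomp.real_closed Require Export complex.
Set Implicit Arguments. Unset Strict Implicit. Unset Printing Implicit Defensive.
Import Order.TTheory GRing.Theory Num.Theory.
Import numFieldNormedType.Exports.
Local Open Scope classical_set_scope.
Local Open Scope ring_scope.

Section Defs.
Variable R : realType.
Notation C := R[i].

Definition qform n (X : 'M[C]_n) (v : 'rV[C]_n) : C :=
  (v *m X *m map_mx Num.conj (v^T)) 0 0.

Definition posdef n (X : 'M[C]_n) : Prop :=
  X \is hermsymmx /\ forall v : 'rV[C]_n, v != 0 -> 0 < qform X v.

Definition loewner_le n (X Y : 'M[C]_n) : Prop :=
  (Y - X) \is hermsymmx /\ forall v : 'rV[C]_n, 0 <= qform (Y - X) v.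

Definition fcalc (f : R -> R) n (X : 'M[C]_n) : 'M[C]_n :=
  invmx (spectralmx X)
    *m diag_mx (map_mx (fun z : C => ((f (complex.Re z))%:C)%C) (spectral_diag X))
    *m spectralmx X.

(* eigenvalues listed in decreasing order (real parts; they are real for
   Hermitian X) *)
Definition eigs n (X : 'M[C]_n) : seq R :=
  sort (fun a b : R => b <= a)
    [seq complex.Re (spectral_diag X 0 i) | i <- enum 'I_n].

(* lam X j = lambda_{j+1}(X)  (0-based index) *)
Definition lam n (X : 'M[C]_n) (j : nat) : R := nth 0 (eigs X) j.

(* determinant as a real number (it is real positive for X in P_n^+) *)
Definition rdet n (X : 'M[C]_n) : R := complex.Re (\det X).

Definition convex_nonneg (f : R -> R) : Prop :=
  forall x y t : R, 0 <= x -> 0 <= y -> 0 <= t -> t <= 1 ->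
    f (t * x + (1 - t) * y) <= t * f x + (1 - t) * f y.

Definition differentiable_nonneg (f : R -> R) : Prop :=
  (forall x : R, 0 < x -> derivable f x 1) /\
  exists l : R, (fun h : R => h^-1 * (f h - f 0)) @ 0^'+ --> l.

End Defs.

(* The theorem follows from two determinant inequalities for Hermitian
   matrices, both proved by congruence to the identity and diagonalisation:
   - if 0 <= F <= k T with T positive definite then det F <= k^n det T
     (apply it to F = f(A) + f(B) and T = A + B);
   - if 0 <= B <= A with A positive definite then
     det (A + B) <= 2^(n-1) (det A + det B), because the eigenvalues c_i of
     A^(-1/2) B A^(-1/2) lie in [0, 1] and prod (1 + c_i) <= 2^(n-1) (1 + prod c_i).
   The hypotheses of the theorem supply exactly this situation: convexity and
   f(0) = 0 give 0 <= f(x) <= (f(M)/M) x on [m, M], hence 0 <= f(A) <= (f(M)/M) A,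
   and the eigenvalue separation (i) (resp. (ii)) gives B <= A (resp. A <= B).
   Finally, taking n-th roots and using a + b <= (a^(1/n) + b^(1/n))^n turns
   det (f(A) + f(B)) <= (f(M)/M)^n 2^(n-1) (det A + det B) into the claim. *)

From mathcomp Require Import all_boot all_order all_algebra.
From mathcomp Require Import all_classical all_reals all_analysis.
From mathcomp.real_closed Require Import complex.
From mathcomp Require Import ring.
Import Order.TTheory GRing.Theory Num.Theory.
Set Implicit Arguments. Unset Strict Implicit. Unset Printing Implicit Defensive.
Local Open Scope ring_scope.
Local Open Scope sesquilinear_scope.

Section HermitianForms.
Variable C : numClosedFieldType.

Lemma trmxC_mul m n p (X : 'M[C]_(m, n)) (Y : 'M[C]_(n, p)) :
  (X *m Y) ^t* = Y ^t* *m X ^t*.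
Proof. by rewrite trmx_mul map_mxM. Qed.

Lemma trmxC_add m n (X Y : 'M[C]_(m, n)) : (X + Y) ^t* = X ^t* + Y ^t*.
Proof. by rewrite linearD /= map_mxD. Qed.

Lemma trmxC_diag n (d : 'rV[C]_n) : (diag_mx d) ^t* = diag_mx (map_mx Num.conj d).
Proof. by rewrite tr_diag_mx map_diag_mx. Qed.

Definition hform n (X : 'M[C]_n) (v : 'rV[C]_n) : C := (v *m X *m v ^t*) 0 0.

Definition form_le n (X Y : 'M[C]_n) : Prop := forall v, hform X v <= hform Y v.

Lemma hformD n (X Y : 'M[C]_n) v : hform (X + Y) v = hform X v + hform Y v.
Proof. by rewrite /hform mulmxDr mulmxDl mxE. Qed.

Lemma hformZ n (c : C) (X : 'M[C]_n) v : hform (c *: X) v = c * hform X v.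
Proof. by rewrite /hform -scalemxAr -scalemxAl mxE. Qed.

Lemma hformN n (X : 'M[C]_n) v : hform (- X) v = - hform X v.
Proof. by rewrite /hform mulmxN mulNmx mxE. Qed.

Lemma hform1_ge0 n (v : 'rV[C]_n) : 0 <= hform 1%:M v.
Proof.
rewrite /hform mulmx1 mxE; apply: sumr_ge0 => i _; rewrite !mxE.
exact: mul_conjC_ge0.
Qed.

Lemma form_le_scalar n (a b : C) : a <= b -> @form_le n a%:M b%:M.
Proof.
move=> ab v; have hform_scalar (x : C) : hform x%:M v = x * hform 1%:M v.
  by rewrite -[x%:M]scalemx1 hformZ.
by rewrite (hform_scalar a) (hform_scalar b); apply: ler_wpM2r; rewrite ?hform1_ge0.
Qed.

Lemma form_leD n (X1 X2 Y1 Y2 : 'M[C]_n) :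
  form_le X1 Y1 -> form_le X2 Y2 -> form_le (X1 + X2) (Y1 + Y2).
Proof. by move=> h1 h2 v; rewrite !hformD lerD. Qed.

Lemma form_le_trans n (X Y Z : 'M[C]_n) :
  form_le X Y -> form_le Y Z -> form_le X Z.
Proof. by move=> hXY hYZ v; exact: le_trans (hXY v) (hYZ v). Qed.

Lemma hform_congr n (S X : 'M[C]_n) v : S ^t* = S ->
  hform (S *m X *m S) v = hform X (v *m S).
Proof. by move=> hS; rewrite /hform trmxC_mul hS !mulmxA. Qed.

Lemma form_le_congr n (S X Y : 'M[C]_n) : S ^t* = S ->
  form_le X Y -> form_le (S *m X *m S) (S *m Y *m S).
Proof. by move=> hS hXY v; rewrite !hform_congr. Qed.

Lemma form_ge0_congr n (S X : 'M[C]_n) : S ^t* = S ->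
  form_le 0 X -> form_le 0 (S *m X *m S).
Proof. by move=> hS /(form_le_congr hS); rewrite mulmx0 mul0mx. Qed.

Lemma form_le_zero n (X : 'M[C]_n) : form_le 0 X <-> form_le 0%:M X.
Proof. by rewrite raddf0. Qed.

Lemma herm_congr n (S X : 'M[C]_n) : S ^t* = S -> X ^t* = X ->
  (S *m X *m S) ^t* = S *m X *m S.
Proof. by move=> hS hX; rewrite !trmxC_mul hS hX mulmxA. Qed.

Definition udiag n (X U : 'M[C]_n) (d : 'rV[C]_n) : Prop :=
  [/\ U *m U ^t* = 1%:M, U ^t* *m U = 1%:M & X = U ^t* *m diag_mx d *m U].

Lemma herm_udiag n (X : 'M[C]_n) : X ^t* = X ->
  udiag X (spectralmx X) (spectral_diag X) /\
  forall i, spectral_diag X 0 i \is Num.real.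
Proof.
move=> hX.
have hh : X \is hermsymmx by apply/is_hermitianmxP; rewrite expr0 scale1r.
have U1 := spectral_unitarymx X.
split; last by move=> i; have /mxOverP := hermitian_spectral_diag_real hh; apply.
have /orthomx_spectralP E := hermitian_normalmx hh.
have UU : spectralmx X *m (spectralmx X) ^t* = 1%:M by apply/unitarymxP.
split => //; last by rewrite {1}E invmx_unitary.
by rewrite -invmx_unitary // mulVmx // unitarymx_unit.
Qed.

Lemma hform_udiag n (U : 'M[C]_n) (d : 'rV[C]_n) v :
  hform (U ^t* *m diag_mx d *m U) v =
  \sum_i d 0 i * ((v *m U ^t*) 0 i * ((v *m U ^t*) 0 i)^*).
Proof.
rewrite /hform -!mulmxA mulmxA.
have -> : U *m v ^t* = (v *m U ^t*) ^t* by rewrite trmxC_mul trmxCK.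
rewrite mulmxA mxE; apply: eq_bigr => i _.
by rewrite mul_mx_diag !mxE mulrAC mulrC.
Qed.

Lemma hform_udiag_le n (U : 'M[C]_n) (d e : 'rV[C]_n) :
  (forall i, d 0 i <= e 0 i) ->
  form_le (U ^t* *m diag_mx d *m U) (U ^t* *m diag_mx e *m U).
Proof.
move=> de v; rewrite !hform_udiag; apply: ler_sum => i _.
by apply: ler_wpM2r => //; apply: mul_conjC_ge0.
Qed.

Lemma hform_udiag_row n (U : 'M[C]_n) (d : 'rV[C]_n) i :
  U *m U ^t* = 1%:M -> hform (U ^t* *m diag_mx d *m U) (row i U) = d 0 i.
Proof.
move=> UU; rewrite hform_udiag -row_mul UU row1 (bigD1 i) //= big1 ?addr0.
  by rewrite !mxE !eqxx /= conjC1 !mulr1.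
by move=> j ji; rewrite !mxE eqxx (negbTE ji) /= conjC0 !mulr0.
Qed.

Lemma udiag_scalar n (U : 'M[C]_n) (c : C) :
  U ^t* *m U = 1%:M -> c%:M = U ^t* *m diag_mx (const_mx c) *m U.
Proof. by move=> UU; rewrite diag_const_mx mul_mx_scalar -scalemxAl UU scalemx1. Qed.

Lemma udiag_lbound n (X U : 'M[C]_n) d (c : C) : udiag X U d ->
  form_le c%:M X <-> forall i, c <= d 0 i.
Proof.
move=> [UU UU' ->]; rewrite (udiag_scalar c UU'); split.
  by move=> h i; have := h (row i U); rewrite !hform_udiag_row // mxE.
by move=> h; apply: hform_udiag_le => i; rewrite mxE.
Qed.

Lemma udiag_ubound n (X U : 'M[C]_n) d (c : C) : udiag X U d ->
  form_le X c%:M <-> forall i, d 0 i <= c.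
Proof.
move=> [UU UU' ->]; rewrite (udiag_scalar c UU'); split.
  by move=> h i; have := h (row i U); rewrite !hform_udiag_row // mxE.
by move=> h; apply: hform_udiag_le => i; rewrite mxE.
Qed.

Lemma det_udiag n (X U : 'M[C]_n) d : udiag X U d -> \det X = \prod_i d 0 i.
Proof.
move=> [_ UU' ->]; rewrite !det_mulmx det_diag mulrAC -det_mulmx UU' det1.
by rewrite mul1r.
Qed.

(* a positive definite matrix T is congruent to the identity: S T S = 1 with
   S = T^(-1/2) Hermitian *)
Lemma inv_sqrt n (T U : 'M[C]_n) t : udiag T U t -> (forall i, 0 < t 0 i) ->
  exists S : 'M[C]_n, S ^t* = S /\ S *m T *m S = 1%:M.
Proof.
move=> [UU UU' ->] tpos.
pose s := \row_i (sqrtC (t 0 i))^-1.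
have sreal : map_mx Num.conj s = s.
  apply/matrixP => i j; rewrite !mxE; apply: conj_Creal.
  by rewrite rpredV sqrtC_real // ltW.
have diagM (a b : 'rV[C]_n) : (U ^t* *m diag_mx a *m U) *m (U ^t* *m diag_mx b *m U)
    = U ^t* *m diag_mx (\row_j (a 0 j * b 0 j)) *m U.
  by rewrite -!mulmxA (mulmxA U) UU mul1mx (mulmxA (diag_mx a)) mulmx_diag.
exists (U ^t* *m diag_mx s *m U); split.
  by rewrite !trmxC_mul trmxCK trmxC_diag sreal mulmxA.
rewrite !diagM (udiag_scalar 1 UU'); congr (_ *m diag_mx _ *m _).
apply/matrixP => i j; rewrite !mxE.
have sq : sqrtC (t 0 j) != 0 by rewrite sqrtC_eq0 gt_eqF.
by rewrite -{2}(sqrtCK (t 0 j)) expr2 mulKf // divff.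
Qed.

End HermitianForms.

(* (1 + x)(1 + y) <= 2 (1 + x y) on [0, 1], iterated over n factors *)
Lemma prod_one_add_le (F : numDomainType) n (c : 'I_n -> F) : (0 < n)%N ->
  (forall i, 0 <= c i <= 1) ->
  \prod_i (1 + c i) <= 2 ^+ n.-1 * (1 + \prod_i c i).
Proof.
have pair_le (x y : F) : 0 <= x <= 1 -> 0 <= y <= 1 ->
    (1 + x) * (1 + y) <= 2 * (1 + x * y).
  move=> /andP[x0 x1] /andP[y0 y1]; rewrite -subr_ge0.
  have -> : 2 * (1 + x * y) - (1 + x) * (1 + y) = (1 - x) * (1 - y) by ring.
  by apply: mulr_ge0; rewrite subr_ge0.
case: n c => // k c _ /=.
elim: k c => [|k IH] c c01; first by rewrite !big_ord1 expr0 mul1r.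
rewrite big_ord_recl [X in _ <= _ * (1 + X)]big_ord_recl.
set P := \prod_(i < k.+1) c (lift ord0 i).
have P01 : 0 <= P <= 1.
  rewrite prodr_ge0 => [|i _]; last by case/andP: (c01 (lift ord0 i)).
  by rewrite prodr_ile1 // => i _; apply: c01.
have c0_ge0 : 0 <= 1 + c ord0 by case/andP: (c01 ord0) => h _; rewrite addr_ge0.
apply: le_trans (_ : (1 + c ord0) * (2 ^+ k * (1 + P)) <= _).
  exact: ler_wpM2l (IH _ _).
rewrite exprSr -mulrA mulrCA; apply: ler_wpM2l; first exact: exprn_ge0.
exact: pair_le.
Qed.

Section DeterminantInequalities.
Variable C : numClosedFieldType.

Lemma udiag_pos n (X U : 'M[C]_n) d (c : C) : udiag X U d -> 0 < c ->
  form_le c%:M X -> forall i, 0 < d 0 i.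
Proof. by move=> dX c0 /(udiag_lbound c dX) cd i; exact: lt_le_trans c0 (cd i). Qed.

Lemma det_gt0 n (X : 'M[C]_n) (c : C) : X ^t* = X -> 0 < c ->
  form_le c%:M X -> 0 < \det X.
Proof.
move=> hX c0 cX; have [dX _] := herm_udiag hX.
by rewrite (det_udiag dX); apply: prodr_gt0 => i _; exact: udiag_pos dX c0 cX i.
Qed.

Lemma det_congr_unit n (S A X : 'M[C]_n) : S *m A *m S = 1%:M ->
  \det X = \det A * \det (S *m X *m S).
Proof.
move=> SAS; have := congr1 determinant SAS; rewrite !det_mulmx det1 => dSAS.
by rewrite -[LHS]mulr1 -dSAS; ring.
Qed.

Lemma det_le_of_form_le n (F T : 'M[C]_n) (c k : C) :
  F ^t* = F -> T ^t* = T -> 0 < c -> form_le c%:M T ->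
  form_le 0 F -> form_le F (k *: T) -> 0 <= \det F <= k ^+ n * \det T.
Proof.
move=> hF hT c0 cT F0 FkT.
have [dT _] := herm_udiag hT.
have [S [hS STS]] := inv_sqrt dT (udiag_pos dT c0 cT).
have [dX _] := herm_udiag (herm_congr hS hF).
set x := spectral_diag _ in dX.
have x0k i : 0 <= x 0 i <= k.
  have /form_le_zero/(udiag_lbound 0 dX) x0 := form_ge0_congr hS F0.
  have := form_le_congr hS FkT.
  rewrite -scalemxAr -scalemxAl STS scalemx1 => /(udiag_ubound k dX) xk.
  by rewrite (x0 i) (xk i).
rewrite (det_congr_unit F STS) (det_udiag dX) [k ^+ n * _]mulrC.
have Tpos := det_gt0 hT c0 cT.
have x0 i : 0 <= x 0 i by case/andP: (x0k i).
rewrite pmulr_rge0 // ler_pM2l // prodr_ge0 /= => [|i _]; last exact: x0.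
have -> : k ^+ n = \prod_(i < n) k by rewrite prodr_const card_ord.
by apply: ler_prod => i _; exact: x0k.
Qed.

Lemma det_add_le n (A B : 'M[C]_n) (c : C) : (0 < n)%N ->
  A ^t* = A -> B ^t* = B -> 0 < c -> form_le c%:M A ->
  form_le 0 B -> form_le B A ->
  \det (A + B) <= 2 ^+ n.-1 * (\det A + \det B).
Proof.
move=> n0 hA hB c0 cA B0 BA.
have [dA _] := herm_udiag hA.
have [S [hS SAS]] := inv_sqrt dA (udiag_pos dA c0 cA).
have [[UU UU' EQ] _] := herm_udiag (herm_congr hS hB).
set Q := S *m B *m S in EQ *; set U := spectralmx Q in UU UU' EQ.
set q := spectral_diag Q in EQ.
have dQ : udiag Q U q by [].
have q01 i : 0 <= q 0 i <= 1.
  have /form_le_zero/(udiag_lbound 0 dQ) q0 := form_ge0_congr hS B0.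
  have := form_le_congr hS BA; rewrite SAS => /(udiag_ubound 1 dQ) q1.
  by rewrite (q0 i) (q1 i).
have d1Q : udiag (1%:M + Q) U (const_mx 1 + q).
  by split => //; rewrite EQ (udiag_scalar 1 UU') [in RHS]linearD /= mulmxDr mulmxDl.
have eAB : \det (A + B) = \det A * \prod_i (1 + q 0 i).
  rewrite (det_congr_unit (A + B) SAS) mulmxDr mulmxDl SAS (det_udiag d1Q).
  by congr (_ * _); apply: eq_bigr => i _; rewrite !mxE.
have eB : \det B = \det A * \prod_i q 0 i.
  by rewrite (det_congr_unit B SAS) (det_udiag dQ).
rewrite eAB eB -{2}[\det A]mulr1 -mulrDr mulrCA.
by apply: ler_wpM2l; [exact/ltW/(det_gt0 hA c0 cA) | exact: prod_one_add_le].
Qed.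

Lemma det_sum_le n (A B FA FB : 'M[C]_n) (c k : C) : (0 < n)%N ->
  A ^t* = A -> B ^t* = B -> FA ^t* = FA -> FB ^t* = FB -> 0 < c -> 0 <= k ->
  form_le c%:M A -> form_le c%:M B -> form_le B A ->
  form_le 0 FA -> form_le 0 FB -> form_le FA (k *: A) -> form_le FB (k *: B) ->
  0 <= \det (FA + FB) <= k ^+ n * 2 ^+ n.-1 * (\det A + \det B).
Proof.
move=> n0 hA hB hFA hFB c0 k0 cA cB BA FA0 FB0 FAk FBk.
have cAB : form_le (c + c)%:M (A + B) by rewrite raddfD; exact: form_leD.
have B0 : form_le 0 B.
  by apply/form_le_zero; exact: form_le_trans (form_le_scalar (ltW c0)) cB.
have hF : (FA + FB) ^t* = FA + FB by rewrite trmxC_add hFA hFB.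
have hT : (A + B) ^t* = A + B by rewrite trmxC_add hA hB.
have FkT : form_le (FA + FB) (k *: (A + B)) by rewrite scalerDr; exact: form_leD.
have F0 : form_le 0 (FA + FB) by rewrite -[0]addr0; exact: form_leD.
have /andP[detF0 FT] := det_le_of_form_le hF hT (addr_gt0 c0 c0) cAB F0 FkT.
rewrite detF0 /= -mulrA; apply: le_trans FT _.
by apply: ler_wpM2l; [exact: exprn_ge0 | exact: det_add_le cA B0 BA].
Qed.

End DeterminantInequalities.

Lemma exprD_ge_sum (F : realDomainType) n (x y : F) : (0 < n)%N ->
  0 <= x -> 0 <= y -> x ^+ n + y ^+ n <= (x + y) ^+ n.
Proof.
case: n => // k _ x0 y0; elim: k => [|k IH]; first by rewrite !expr1.
apply: le_trans (_ : (x + y) * (x ^+ k.+1 + y ^+ k.+1) <= _); last first.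
  by rewrite [X in _ <= X]exprS; apply: ler_wpM2l; rewrite ?addr_ge0.
rewrite -subr_ge0.
have -> : (x + y) * (x ^+ k.+1 + y ^+ k.+1) - (x ^+ k.+2 + y ^+ k.+2)
    = x * y ^+ k.+1 + y * x ^+ k.+1 by rewrite !exprS; ring.
by rewrite addr_ge0 // mulr_ge0 // exprn_ge0.
Qed.

Section RealInequalities.
Variable R : realType.

Lemma powR_invn_expK n (x : R) : (0 < n)%N -> 0 <= x ->
  powR (x ^+ n) n%:R^-1 = x.
Proof.
move=> n0 x0; rewrite -powR_mulrn // -powRrM divff ?powRr1 //.
by rewrite pnatr_eq0 -lt0n.
Qed.

Lemma powR_invnK n (a : R) : (0 < n)%N -> 0 <= a -> (powR a n%:R^-1) ^+ n = a.
Proof.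
move=> n0 a0; rewrite -powR_mulrn ?powR_ge0 // -powRrM mulVf ?powRr1 //.
by rewrite pnatr_eq0 -lt0n.
Qed.

Lemma powR_invn_subadd n (a b : R) : (0 < n)%N -> 0 <= a -> 0 <= b ->
  powR (a + b) n%:R^-1 <= powR a n%:R^-1 + powR b n%:R^-1.
Proof.
move=> n0 a0 b0; set x := powR a _; set y := powR b _.
have xy0 : 0 <= x + y by rewrite addr_ge0 ?powR_ge0.
rewrite -[X in _ <= X](powR_invn_expK n0 xy0).
apply: ge0_ler_powR; rewrite ?invr_ge0 ?nnegrE ?addr_ge0 ?exprn_ge0 //.
by rewrite -{1}(powR_invnK n0 a0) -{1}(powR_invnK n0 b0) exprD_ge_sum ?powR_ge0.
Qed.

Lemma root_bound n (D K a b : R) : (0 < n)%N -> 0 <= D -> 0 <= K ->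
  0 <= a -> 0 <= b -> D <= K ^+ n * 2 ^+ n.-1 * (a + b) ->
  powR D n%:R^-1 <= powR 2 (1 - n%:R^-1) * K * (powR a n%:R^-1 + powR b n%:R^-1).
Proof.
move=> n0 D0 K0 a0 b0 hD; set p := n%:R^-1.
have two_root : powR ((2 : R) ^+ n.-1) p = powR 2 (1 - p).
  rewrite -powR_mulrn // -powRrM; congr powR.
  have np : n%:R * p = 1 by rewrite /p divff // pnatr_eq0 -lt0n.
  have hn : n%:R = n.-1%:R + 1 :> R by rewrite natr1 prednK.
  by rewrite -[X in _ = X - p]np hn mulrDl mul1r addrK.
apply: le_trans (_ : powR (K ^+ n * 2 ^+ n.-1 * (a + b)) p <= _).
  apply: ge0_ler_powR; rewrite ?invr_ge0 ?nnegrE ?mulr_ge0 ?exprn_ge0 ?addr_ge0 //.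
rewrite !powRM ?mulr_ge0 ?exprn_ge0 ?addr_ge0 // powR_invn_expK // two_root.
rewrite [K * _]mulrC; apply: ler_wpM2l; first by rewrite mulr_ge0 ?powR_ge0.
exact: powR_invn_subadd.
Qed.

Lemma convex_chord (f : R -> R) (M x : R) : convex_nonneg f -> f 0 = 0 ->
  0 < M -> 0 <= x <= M -> f x <= f M / M * x.
Proof.
move=> fconv f00 M0 /andP[x0 xM].
have t0 : 0 <= x / M by rewrite divr_ge0 // ltW.
have t1 : x / M <= 1 by rewrite ler_pdivrMr // mul1r.
have := fconv M 0 (x / M) (ltW M0) (lexx 0) t0 t1.
rewrite f00 !mulr0 !addr0 divfK ?gt_eqF // => h; apply: le_trans h _.
by rewrite mulrC mulrA mulrAC.
Qed.

End RealInequalities.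

Section ComplexMatrices.
Variable R : realType.
Local Notation C := R[i].

Lemma posdef_herm n (X : 'M[C]_n) : posdef X -> X ^t* = X.
Proof. by case=> /is_hermitianmxP hX _; rewrite [in RHS]hX expr0 scale1r. Qed.

Lemma loewner_form_le n (X Y : 'M[C]_n) : loewner_le X Y -> form_le X Y.
Proof.
move=> [_ XY] v; have : 0 <= hform (Y - X) v := XY v.
by rewrite hformD hformN subr_ge0.
Qed.

Lemma spectral_bounds n (X : 'M[C]_n) (m M : R) : X ^t* = X ->
  form_le (m%:C)%C%:M X -> form_le X (M%:C)%C%:M ->
  forall i, m <= complex.Re (spectral_diag X 0 i) <= M.
Proof.
move=> hX mX XM i; have [dX realX] := herm_udiag hX.
by rewrite -!lecR RRe_real // ((udiag_lbound _ dX).1 mX i) ((udiag_ubound _ dX).1 XM i).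
Qed.

Lemma fcalc_bounds (f : R -> R) n (X : 'M[C]_n) (m M k : R) : X ^t* = X ->
  form_le (m%:C)%C%:M X -> form_le X (M%:C)%C%:M ->
  (forall x, m <= x <= M -> 0 <= f x <= k * x) ->
  [/\ (fcalc f X) ^t* = fcalc f X, form_le 0 (fcalc f X) &
      form_le (fcalc f X) ((k%:C)%C *: X)].
Proof.
move=> hX mX XM fk.
have [[UU UU' EX] realX] := herm_udiag hX.
set U := spectralmx X in UU UU' EX; set a := spectral_diag X in EX realX.
pose e := map_mx (fun z : C => ((f (complex.Re z))%:C)%C) a.
have EF : fcalc f X = U ^t* *m diag_mx e *m U.
  by rewrite /fcalc invmx_unitary // spectral_unitarymx.
have e_bounds i : 0 <= e 0 i <= (k%:C)%C * a 0 i.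
  have ai : a 0 i = ((complex.Re (a 0 i))%:C)%C by rewrite RRe_real.
  rewrite mxE [X in _ * X]ai -rmorphM /= !lecR.
  exact/fk/(spectral_bounds hX mX XM).
rewrite EF; split.
- rewrite !trmxC_mul trmxCK trmxC_diag mulmxA; congr (_ *m diag_mx _ *m _).
  by apply/matrixP => i j; rewrite !mxE conj_Creal //; apply/complex_realP; eexists.
- apply/form_le_zero/(udiag_lbound 0 (And3 UU UU' erefl)) => i.
  by case/andP: (e_bounds i).
- have -> : (k%:C)%C *: X = U ^t* *m diag_mx ((k%:C)%C *: a) *m U.
    by rewrite EX linearZ /= -scalemxAr -scalemxAl.
  by apply: hform_udiag_le => i; rewrite [X in _ <= X]mxE; case/andP: (e_bounds i).
Qed.

Lemma eigs_size n (X : 'M[C]_n) : size (eigs X) = n.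
Proof. by rewrite /eigs size_sort size_map size_enum_ord. Qed.

Lemma lam_mem n (X : 'M[C]_n) i :
  exists2 j, (j < n)%N & lam X j = complex.Re (spectral_diag X 0 i).
Proof.
set r := complex.Re _.
have hr : r \in eigs X by rewrite /eigs mem_sort; apply: map_f; rewrite mem_enum.
exists (index r (eigs X)); last by rewrite /lam nth_index.
by have := index_mem r (eigs X); rewrite hr eigs_size.
Qed.

Lemma lam_mono n (X : 'M[C]_n) i j : (i <= j)%N -> (j < n)%N -> lam X j <= lam X i.
Proof.
move=> ij jn.
have sorted_eigs : sorted (fun a b : R => b <= a) (eigs X).
  by apply: sort_sorted => a b; exact: le_total.
apply: (@sorted_leq_nth _ _ _ _ 0 _ sorted_eigs i j) => //.
- by move=> y x z yx zy; exact: le_trans zy yx.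
- by rewrite inE eigs_size (leq_ltn_trans ij jn).
- by rewrite inE eigs_size.
Qed.

Lemma form_le_of_gap n (X Y : 'M[C]_n) (r : R) : X ^t* = X -> Y ^t* = Y ->
  (forall i, complex.Re (spectral_diag Y 0 i) <= r) ->
  (forall i, r <= complex.Re (spectral_diag X 0 i)) -> form_le Y X.
Proof.
move=> hX hY Yr rX.
have [dX realX] := herm_udiag hX; have [dY realY] := herm_udiag hY.
apply: (@form_le_trans _ _ _ ((r%:C)%C%:M)).
  by apply/(udiag_ubound _ dY) => i; rewrite -(RRe_real (realY i)) lecR.
by apply/(udiag_lbound _ dX) => i; rewrite -(RRe_real (realX i)) lecR.
Qed.

Lemma gap_below n (A B : 'M[C]_n) : (0 < n)%N -> A ^t* = A -> B ^t* = B ->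
  (forall j : 'I_n, lam B j < lam A n.-1) -> form_le B A.
Proof.
move=> n0 hA hB BA; apply: (form_le_of_gap hA hB (r := lam A n.-1)) => i.
  by have [j jn <-] := lam_mem B i; exact: ltW (BA (Ordinal jn)).
have [j jn <-] := lam_mem A i.
by apply: lam_mono; rewrite ?prednK // -ltnS prednK.
Qed.

Lemma gap_above n (A B : 'M[C]_n) : A ^t* = A -> B ^t* = B ->
  (forall j : 'I_n, lam A 0 < lam B j) -> form_le A B.
Proof.
move=> hA hB AB; apply: (form_le_of_gap hB hA (r := lam A 0)) => i.
  by have [j jn <-] := lam_mem A i; exact: lam_mono (leq0n j) jn.
by have [j jn <-] := lam_mem B i; exact: ltW (AB (Ordinal jn)).
Qed.

Lemma Re_det_bound (F DA DB : C) (k : R) n : 0 <= F -> 0 < DA -> 0 < DB ->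
  F <= (k%:C)%C ^+ n * 2 ^+ n.-1 * (DA + DB) ->
  [/\ 0 <= complex.Re F, 0 <= complex.Re DA, 0 <= complex.Re DB &
   complex.Re F <= k ^+ n * 2 ^+ n.-1 * (complex.Re DA + complex.Re DB)].
Proof.
move=> F0 A0 B0 hF.
have rF := ger0_real F0; have rA := gtr0_real A0; have rB := gtr0_real B0.
move: F0 A0 B0 hF; rewrite -(RRe_real rF) -(RRe_real rA) -(RRe_real rB).
rewrite !lecR !ltcR => -> /ltW -> /ltW -> hF; split => //.
by rewrite -lecR !rmorphM !rmorphXn !rmorphD /= rmorph1.
Qed.

(* the theorem under the ordering B <= A; case (ii) follows by symmetry *)
Lemma root_det_bound_ordered n (m M : R) (A B : 'M[C]_n) (f : R -> R) :
  (0 < n)%N -> 0 < m -> m < M -> A ^t* = A -> B ^t* = B ->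
  loewner_le (m%:C)%C%:M A -> loewner_le A (M%:C)%C%:M ->
  loewner_le (m%:C)%C%:M B -> loewner_le B (M%:C)%C%:M ->
  (forall x : R, 0 <= x -> 0 <= f x) -> f 0 = 0 -> convex_nonneg f ->
  form_le B A ->
  powR (rdet (fcalc f A + fcalc f B)) (n%:R^-1)
    <= powR 2 (1 - n%:R^-1) * (f M / M)
       * (powR (rdet A) (n%:R^-1) + powR (rdet B) (n%:R^-1)).
Proof.
move=> n0 m0 mM hA hB /loewner_form_le lA /loewner_form_le uA
  /loewner_form_le lB /loewner_form_le uB f_ge0 f00 fconv BA.
have M0 : 0 < M := lt_trans m0 mM.
set k := f M / M.
have k0 : 0 <= k by rewrite divr_ge0 ?f_ge0 ?ltW.
have fk x : m <= x <= M -> 0 <= f x <= k * x.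
  move=> /andP[mx xM]; have x0 : 0 <= x := le_trans (ltW m0) mx.
  by rewrite f_ge0 //= convex_chord // x0.
have [hFA FA0 FAk] := fcalc_bounds hA lA uA fk.
have [hFB FB0 FBk] := fcalc_bounds hB lB uB fk.
have mC : 0 < (m%:C)%C by rewrite ltcR.
have kC : 0 <= (k%:C)%C by rewrite lecR.
have /andP[F0 Fle] := det_sum_le n0 hA hB hFA hFB mC kC lA lB BA FA0 FB0 FAk FBk.
have [ReF0 ReA0 ReB0 ReFle] :=
  Re_det_bound F0 (det_gt0 hA mC lA) (det_gt0 hB mC lB) Fle.
exact: root_bound.
Qed.

End ComplexMatrices.

Theorem theorem3p3 (R : realType) (n : nat) (m M : R) (A B : 'M[R[i]]_n)
    (f : R -> R) :
  (0 < n)%N -> 0 < m -> m < M ->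
  posdef A -> posdef B ->
  loewner_le (m%:C)%C%:M A -> loewner_le A (M%:C)%C%:M ->
  loewner_le (m%:C)%C%:M B -> loewner_le B (M%:C)%C%:M ->
  (forall x : R, 0 <= x -> 0 <= f x) -> f 0 = 0 ->
  convex_nonneg f -> differentiable_nonneg f ->
  ((forall j : 'I_n, lam B j < lam A n.-1) \/
   (forall j : 'I_n, lam A 0 < lam B j)) ->
  powR (rdet (fcalc f A + fcalc f B)) (n%:R^-1)
    <= powR 2 (1 - n%:R^-1) * (f M / M)
       * (powR (rdet A) (n%:R^-1) + powR (rdet B) (n%:R^-1)).
Proof.
move=> n0 m0 mM /posdef_herm hA /posdef_herm hB lA uA lB uB f_ge0 f00 fconv _.
case=> [BA | AB].
  exact: root_det_bound_ordered n0 m0 mM hA hB lA uA lB uB f_ge0 f00 fconv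
    (gap_below n0 hA hB BA).
rewrite addrC [powR (rdet A) _ + _]addrC.
exact: root_det_bound_ordered n0 m0 mM hB hA lB uB lA uA f_ge0 f00 fconv
  (gap_above hA hB AB).
Qed.
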